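(* Let $\mathcal{Q}$ be a small involutive quantaloid and $\mathbb{A}$ a $\mathcal{Q}$-category. The following are equivalent: (1) the functor $L_{\mathbb{A}}\colon(\mathbb{A}_{\mathsf s})_{\mathsf{sc}}\to(\mathbb{A}_{\mathsf{cc}})_{\mathsf s}$, $\phi\mapsto\mathbb{A}(-,S_{\mathbb{A}}-)\otimes\phi$, is surjective on objects; (2) for every $X\in\mathcal{Q}_0$ and every left adjoint presheaf $\psi\colon *_X\to\mathbb{A}$, the presheaf $\psi_{\mathsf s}\colon *_X\to\mathbb{A}_{\mathsf s}$ is a symmetric left adjoint; (3) for every $\mathcal{Q}$-category $\mathbb{X}$ and every left adjoint distributor $\Psi\colon\mathbb{X}\to\mathbb{A}$, the distributor $\Psi_{\mathsf s}\colon\mathbb{X}_{\mathsf s}\to\mathbb{A}_{\mathsf s}$ is a symmetric left adjoint. Moreover, when (1) holds, $L_{\mathbb{A}}$ is an isomorphism with inverse $\psi\mapsto\psi_{\mathsf s}$.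
   Context: A quantaloid is a category enriched in $\mathsf{Sup}$; an involution is an identity-on-objects, direction-reversing, monotone map $f\mapsto f^{\mathsf o}$ on morphisms with $(g\circ f)^{\mathsf o}=f^{\mathsf o}\circ g^{\mathsf o}$, $f^{\mathsf{oo}}=f$. A $\mathcal{Q}$-category $\mathbb{A}$: objects with types $tx\in\mathcal{Q}_0$, homs $\mathbb{A}(y,x)\colon tx\to ty$ with $\mathbb{A}(z,y)\circ\mathbb{A}(y,x)\le\mathbb{A}(z,x)$, $1_{tx}\le\mathbb{A}(x,x)$; symmetric if $\mathbb{A}(x,y)=\mathbb{A}(y,x)^{\mathsf o}$. Symmetrisation $\mathbb{A}_{\mathsf s}$: same objects, $\mathbb{A}_{\mathsf s}(y,x)=\mathbb{A}(y,x)\wedge\mathbb{A}(x,y)^{\mathsf o}$; $S_{\mathbb{A}}\colon\mathbb{A}_{\mathsf s}\to\mathbb{A}$ is the identity on objects. Distributors $\Phi\colon\mathbb{A}\to\mathbb{B}$: arrows $\Phi(y,x)\colon tx\to ty$ with $\mathbb{B}(y',y)\circ\Phi(y,x)\le\Phi(y',x)$, $\Phi(y,x)\circ\mathbb{A}(x,x')\le\Phi(y,x')$; composition $(\Psi\otimes\Phi)(z,x)=\bigvee_y\Psi(z,y)\circ\Phi(y,x)$; left adjoint with right adjoint $\Phi^*$ if $\mathbb{A}\le\Phi^*\otimes\Phi$, $\Phi\otimes\Phi^*\le\mathbb{B}$. $\mathbb{A}(-,S_{\mathbb{A}}-)\colon\mathbb{A}_{\mathsf s}\to\mathbb{A}$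 has elements $\mathbb{A}(y,x)$. For distributors between symmetric categories, $\Phi^{\mathsf o}(x,y)=\Phi(y,x)^{\mathsf o}$, and $\Phi$ is a symmetric left adjoint if left adjoint to $\Phi^{\mathsf o}$. For a left adjoint $\Psi\colon\mathbb{X}\to\mathbb{A}$, $\Psi_{\mathsf s}\colon\mathbb{X}_{\mathsf s}\to\mathbb{A}_{\mathsf s}$ is the distributor $\Psi_{\mathsf s}(a,x)=\Psi(a,x)\wedge\Psi^*(x,a)^{\mathsf o}$ (equivalently $(\mathbb{A}(S_{\mathbb{A}}-,-)\otimes\Psi\otimes\mathbb{X}(-,S_{\mathbb{X}}-))\wedge(\mathbb{X}(S_{\mathbb{X}}-,-)\otimes\Psi^*\otimes\mathbb{A}(-,S_{\mathbb{A}}-))^{\mathsf o}$). $*_X$: one object of type $X$, hom $1_X$ (symmetric, with $( *_X)_{\mathsf s}=*_X$); a presheaf is a distributor $*_X\to\mathbb{A}$. Cauchy completion $\mathbb{A}_{\mathsf{cc}}$: objects the left adjoint presheaves $\phi\colon*_X\to\mathbb{A}$ (type $X$), hom $\mathbb{A}_{\mathsf{cc}}(\psi,\phi)$ the unique element of $\psi^*\otimes\phi$. For symmetric $\mathbb{B}$, $\mathbb{B}_{\mathsf{sc}}$ is the full subcategory of $\mathbb{B}_{\mathsf{cc}}$ on symmetric left adjoint presheaves. *)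

Set Implicit Arguments.

Record Quantaloid := {
  qobj : Type;
  qhom : qobj -> qobj -> Type;
  qle : forall X Y, qhom X Y -> qhom X Y -> Prop;
  qsup : forall X Y, (qhom X Y -> Prop) -> qhom X Y;
  qcomp : forall X Y Z, qhom Y Z -> qhom X Y -> qhom X Z;
  qid : forall X, qhom X X;
  qle_refl : forall X Y (f : qhom X Y), qle f f;
  qle_trans : forall X Y (f g h : qhom X Y), qle f g -> qle g h -> qle f h;
  qle_antisym : forall X Y (f g : qhom X Y), qle f g -> qle g f -> f = g;
  qsup_ub : forall X Y (S : qhom X Y -> Prop) f, S f -> qle f (qsup S);
  qsup_least : forall X Y (S : qhom X Y -> Prop) g,
      (forall f, S f -> qle f g) -> qle (qsup S) g;
  qcomp_assoc : forall X Y Z W (h : qhom Z W) (g : qhom Y Z) (f : qhom X Y),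
      qcomp h (qcomp g f) = qcomp (qcomp h g) f;
  qcomp_id_l : forall X Y (f : qhom X Y), qcomp (qid Y) f = f;
  qcomp_id_r : forall X Y (f : qhom X Y), qcomp f (qid X) = f;
  qcomp_sup_l : forall X Y Z (g : qhom Y Z) (S : qhom X Y -> Prop),
      qcomp g (qsup S) = qsup (fun h => exists f, S f /\ h = qcomp g f);
  qcomp_sup_r : forall X Y Z (S : qhom Y Z -> Prop) (f : qhom X Y),
      qcomp (qsup S) f = qsup (fun h => exists g, S g /\ h = qcomp g f)
}.

Arguments qle {_ _ _} _ _.
Arguments qsup {_ _ _} _.
Arguments qcomp {_ _ _ _} _ _.
Arguments qid {_} _.

Record InvQuantaloid := {
  iq :> Quantaloid;
  qinv : forall X Y, qhom iq X Y -> qhom iq Y X;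
  qinv_mono : forall X Y (f g : qhom iq X Y), qle f g -> qle (qinv X Y f) (qinv X Y g);
  qinv_comp : forall X Y Z (g : qhom iq Y Z) (f : qhom iq X Y),
      qinv X Z (qcomp g f) = qcomp (qinv X Y f) (qinv Y Z g);
  qinv_inv : forall X Y (f : qhom iq X Y), qinv Y X (qinv X Y f) = f
}.

Arguments qinv {_ _ _} _.

Section Defs.
Variable Q : InvQuantaloid.

Definition qmeet X Y (f g : qhom Q X Y) : qhom Q X Y :=
  qsup (fun h => qle h f /\ qle h g).
Arguments qmeet {X Y} f g.

Record QCatData := {
  ob : Type;
  ty : ob -> qobj Q;
  hm : forall (y x : ob), qhom Q (ty x) (ty y)
}.

Definition IsQCat (A : QCatData) : Prop :=
  (forall z y x, qle (qcomp (hm A z y) (hm A y x)) (hm A z x)) /\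
  (forall x, qle (qid (ty A x)) (hm A x x)).

Definition IsSymmetric (A : QCatData) : Prop :=
  forall x y, hm A x y = qinv (hm A y x).

Definition As (A : QCatData) : QCatData :=
  {| ob := ob A; ty := ty A;
     hm := fun y x => qmeet (hm A y x) (qinv (hm A x y)) |}.

Definition star (X : qobj Q) : QCatData :=
  {| ob := unit; ty := fun _ => X; hm := fun _ _ => qid X |}.

Definition dist (A B : QCatData) := forall (y : ob B) (x : ob A), qhom Q (ty A x) (ty B y).

Definition IsDist (A B : QCatData) (Phi : dist A B) : Prop :=
  (forall y' y x, qle (qcomp (hm B y' y) (Phi y x)) (Phi y' x)) /\
  (forall y x x', qle (qcomp (Phi y x) (hm A x x')) (Phi y x')).

Definition distcomp (A B C : QCatData) (Psi : dist B C) (Phi : dist A B) : dist A C :=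
  fun z x => qsup (fun h => exists y, h = qcomp (Psi z y) (Phi y x)).

Definition IsAdj (A B : QCatData) (Phi : dist A B) (R : dist B A) : Prop :=
  IsDist Phi /\ IsDist R /\
  (forall x' x, qle (hm A x' x) (distcomp R Phi x' x)) /\
  (forall y' y, qle (distcomp Phi R y' y) (hm B y' y)).

Definition IsLeftAdj (A B : QCatData) (Phi : dist A B) : Prop :=
  exists R, IsAdj Phi R.

(** The right adjoint Phi^* of a left adjoint Phi. Right adjoints are unique,
    so we take the pointwise sup over all right adjoints (which is the right
    adjoint whenever Phi is a left adjoint). *)
Definition radj (A B : QCatData) (Phi : dist A B) : dist B A :=
  fun x y => qsup (fun h => exists R, IsAdj Phi R /\ h = R x y).

Definition dop (A B : QCatData) (Phi : dist A B) : dist B A :=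
  fun x y => qinv (Phi y x).

Definition IsSymLeftAdj (A B : QCatData) (Phi : dist A B) : Prop :=
  IsAdj Phi (dop Phi).

Definition SA (A : QCatData) : dist (As A) A := fun y x => hm A y x.

Definition dist_s (X A : QCatData) (Psi : dist X A) : dist (As X) (As A) :=
  fun a x => qmeet (Psi a x) (qinv (radj Psi x a)).

(** hom of the Cauchy completion: A_cc(psi, phi) = the unique element of
    psi^* (x) phi, for phi : *_X -|-> A, psi : *_Y -|-> A. *)
Definition cchom (A : QCatData) (X Y : qobj Q)
    (psi : dist (star Y) A) (phi : dist (star X) A) : qhom Q X Y :=
  distcomp (radj psi) phi tt tt.

End Defs.

Arguments As {Q} A.
Arguments star {Q} X.
Arguments SA {Q} A.
Arguments qmeet {Q X Y} f g.

(* A symmetric left adjoint [phi : *_X -> A_s] has [L_A phi = A(-,S-) (x) phi]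
   as a left adjoint presheaf on [A], with right adjoint [phi^o (x) A(S-,-)]:
   since [phi <= L_A phi] and [phi^o <= phi^o (x) A(S-,-)], the unit of [phi]
   yields that of [L_A phi], and its counit lands in [A_s <= A].  The unit of
   [phi] also characterises [phi a] as the largest arrow [g] with
   [g o phi(b)^o <= A_s(a, b)] for all [b]; this gives [(L_A phi)_s = phi] and
   the comparison of homs.  Conversely, if [psi_s] is a symmetric left adjoint
   then [L_A psi_s = psi], by the counit of [psi].  Condition (3) reduces to (2) because [Psi_s] is computed column
   by column: [Psi(-, x)] is a left adjoint presheaf with right adjoint
   [Psi^*(x, -)], and its symmetrisation is the column [Psi_s(-, x)]. *)

From Stdlib Require Import FunctionalExtensionality.

Set Implicit Arguments. Unset Strict Implicit.

Arguments qle_refl {q X Y} f.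
Arguments qle_trans {q X Y f g h} _ _.
Arguments qle_antisym {q X Y f g} _ _.
Arguments qsup_ub {q X Y S f} _.
Arguments qsup_least {q X Y S g} _.
Arguments qcomp_assoc {q X Y Z W} h g f.
Arguments qcomp_id_l {q X Y} f.
Arguments qcomp_id_r {q X Y} f.
Arguments qcomp_sup_l {q X Y Z} g S.
Arguments qcomp_sup_r {q X Y Z} S f.
Arguments qinv_mono {i X Y f g} _.
Arguments qinv_comp {i X Y Z} g f.
Arguments qinv_inv {i X Y} f.

Local Notation "f ≤ g" := (qle f g) (at level 70).
Local Notation "g ⊙ f" := (qcomp g f) (at level 40, left associativity).

Section QuantaloidFacts.
Variable Q : InvQuantaloid.

Lemma qcomp_monol X Y Z (g : qhom Q Y Z) (f f' : qhom Q X Y) : f ≤ f' -> g ⊙ f ≤ g ⊙ f'.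
Proof.
  intro Hf.
  assert (Ef' : qsup (fun h => h = f \/ h = f') = f').
  { apply qle_antisym.
    - apply qsup_least; intros h [-> | ->]; [exact Hf | apply qle_refl].
    - apply qsup_ub; auto. }
  rewrite <- Ef', qcomp_sup_l. apply qsup_ub. exists f; auto.
Qed.

Lemma qcomp_monor X Y Z (g g' : qhom Q Y Z) (f : qhom Q X Y) : g ≤ g' -> g ⊙ f ≤ g' ⊙ f.
Proof.
  intro Hg.
  assert (Eg' : qsup (fun h => h = g \/ h = g') = g').
  { apply qle_antisym.
    - apply qsup_least; intros h [-> | ->]; [exact Hg | apply qle_refl].
    - apply qsup_ub; auto. }
  rewrite <- Eg', qcomp_sup_r. apply qsup_ub. exists g; auto.
Qed.

Lemma qcomp_mono X Y Z (g g' : qhom Q Y Z) (f f' : qhom Q X Y) :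
  g ≤ g' -> f ≤ f' -> g ⊙ f ≤ g' ⊙ f'.
Proof.
  intros Hg Hf. exact (qle_trans (qcomp_monol g Hf) (qcomp_monor f' Hg)).
Qed.

Lemma qcomp_qsup_le X Y Z (g : qhom Q Y Z) (S : qhom Q X Y -> Prop) t :
  (forall f, S f -> g ⊙ f ≤ t) -> g ⊙ qsup S ≤ t.
Proof.
  intro H. rewrite qcomp_sup_l. apply qsup_least. intros h [f [Sf ->]]. auto.
Qed.

Lemma qsup_qcomp_le X Y Z (S : qhom Q Y Z -> Prop) (f : qhom Q X Y) t :
  (forall g, S g -> g ⊙ f ≤ t) -> qsup S ⊙ f ≤ t.
Proof.
  intro H. rewrite qcomp_sup_r. apply qsup_least. intros h [g [Sg ->]]. auto.
Qed.

Lemma le_qcomp_idl X Y (g : qhom Q Y Y) (f : qhom Q X Y) : qid Y ≤ g -> f ≤ g ⊙ f.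
Proof.
  intro Hg. eapply qle_trans; [|exact (qcomp_monor f Hg)]. rewrite qcomp_id_l. apply qle_refl.
Qed.

Lemma le_qcomp_idr X Y (g : qhom Q X X) (f : qhom Q X Y) : qid X ≤ g -> f ≤ f ⊙ g.
Proof.
  intro Hg. eapply qle_trans; [|exact (qcomp_monol f Hg)]. rewrite qcomp_id_r. apply qle_refl.
Qed.

Lemma qinv_lel X Y (f : qhom Q X Y) g : f ≤ qinv g -> qinv f ≤ g.
Proof. intro H. rewrite <- (qinv_inv g). apply qinv_mono, H. Qed.

Lemma qinv_ler X Y (f : qhom Q X Y) g : qinv f ≤ g -> f ≤ qinv g.
Proof. intro H. rewrite <- (qinv_inv f). apply qinv_mono, H. Qed.

Lemma qinv_id X : qinv (qid X) = qid (q := Q) X.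
Proof.
  transitivity (qinv (qid X) ⊙ qinv (qinv (qid X))).
  - rewrite qinv_inv, qcomp_id_r. reflexivity.
  - rewrite <- qinv_comp, qcomp_id_r, qinv_inv. reflexivity.
Qed.

Lemma qmeet_lel X Y (f g : qhom Q X Y) : qmeet f g ≤ f.
Proof. apply qsup_least. intros h [H _]. exact H. Qed.

Lemma qmeet_ler X Y (f g : qhom Q X Y) : qmeet f g ≤ g.
Proof. apply qsup_least. intros h [_ H]. exact H. Qed.

Lemma qmeet_glb X Y (f g h : qhom Q X Y) : h ≤ f -> h ≤ g -> h ≤ qmeet f g.
Proof. intros; apply qsup_ub; auto. Qed.

Lemma qmeet_id_qinv X : qmeet (qid X) (qinv (qid X)) = qid (q := Q) X.
Proof.
  apply qle_antisym.
  - apply qmeet_lel.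
  - apply qmeet_glb; [|rewrite qinv_id]; apply qle_refl.
Qed.

Lemma distcomp_le (A B C : QCatData Q) (Psi : dist B C) (Phi : dist A B) z x t :
  (forall y, Psi z y ⊙ Phi y x ≤ t) -> distcomp Psi Phi z x ≤ t.
Proof. intro H. apply qsup_least. intros h [y ->]. auto. Qed.

Lemma le_distcomp (A B C : QCatData Q) (Psi : dist B C) (Phi : dist A B) z x y :
  Psi z y ⊙ Phi y x ≤ distcomp Psi Phi z x.
Proof. apply qsup_ub. exists y; reflexivity. Qed.

Lemma distcomp_qcomp_le (A B C : QCatData Q) (Psi : dist B C) (Phi : dist A B)
    z x W (f : qhom Q W (ty A x)) t :
  (forall y, Psi z y ⊙ Phi y x ⊙ f ≤ t) -> distcomp Psi Phi z x ⊙ f ≤ t.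
Proof. intro H. apply qsup_qcomp_le. intros h [y ->]. auto. Qed.

Lemma qcomp_distcomp_le (A B C : QCatData Q) (Psi : dist B C) (Phi : dist A B)
    z x W (g : qhom Q (ty C z) W) t :
  (forall y, g ⊙ (Psi z y ⊙ Phi y x) ≤ t) -> g ⊙ distcomp Psi Phi z x ≤ t.
Proof. intro H. apply qcomp_qsup_le. intros h [y ->]. auto. Qed.

Lemma qcomp_distcomp_qcomp_le (A B C : QCatData Q) (Psi : dist B C) (Phi : dist A B)
    z x V W (g : qhom Q (ty C z) W) (f : qhom Q V (ty A x)) t :
  (forall y, g ⊙ (Psi z y ⊙ Phi y x) ⊙ f ≤ t) -> g ⊙ distcomp Psi Phi z x ⊙ f ≤ t.
Proof.
  intro H. unfold distcomp. rewrite qcomp_sup_l. apply qsup_qcomp_le.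
  intros h [k [[y ->] ->]]. auto.
Qed.

Lemma radj_unique (A B : QCatData Q) (Phi : dist A B) R R' :
  (forall x, qid (ty A x) ≤ hm A x x) -> IsAdj Phi R -> IsAdj Phi R' ->
  forall x y, R' x y ≤ R x y.
Proof.
  intros Arefl [_ [[_ HR] [Hunit _]]] [_ [_ [_ Hcounit']]] x y.
  apply (qle_trans (g := distcomp R Phi x x ⊙ R' x y)).
  { apply le_qcomp_idl, (qle_trans (Arefl x) (Hunit x x)). }
  apply distcomp_qcomp_le. intro y'.
  rewrite <- qcomp_assoc. eapply qle_trans; [|apply HR].
  apply qcomp_monol. eapply qle_trans; [apply le_distcomp | apply Hcounit'].
Qed.

Lemma radj_eq (A B : QCatData Q) (Phi : dist A B) R :
  (forall x, qid (ty A x) ≤ hm A x x) -> IsAdj Phi R -> radj Phi = R.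
Proof.
  intros Arefl HR.
  apply functional_extensionality_dep; intro x.
  apply functional_extensionality_dep; intro y.
  apply qle_antisym.
  - apply qsup_least. intros h [R' [HR' ->]]. exact (radj_unique Arefl HR HR' x y).
  - apply qsup_ub. exists R; auto.
Qed.

Lemma star_refl X (u : ob (star X)) : qid (ty (star X) u) ≤ hm (star (Q := Q) X) u u.
Proof. apply qle_refl. Qed.

Lemma star_IsQCat X : IsQCat (star (Q := Q) X).
Proof. split; intros; cbn; [rewrite qcomp_id_l|]; apply qle_refl. Qed.

Lemma As_qinv_le (C : QCatData Q) a b : qinv (hm (As C) a b) ≤ hm (As C) b a.
Proof. apply qmeet_glb; [apply qinv_lel, qmeet_ler | apply qinv_mono, qmeet_lel]. Qed.

Lemma dop_IsDist (C D : QCatData Q) (Phi : dist (As C) (As D)) :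
  IsDist Phi -> IsDist (dop Phi).
Proof.
  intros [Hl Hr]; split; intros; unfold dop; apply qinv_ler; rewrite qinv_comp, qinv_inv.
  - eapply qle_trans; [apply qcomp_monol, As_qinv_le | apply Hr].
  - eapply qle_trans; [apply qcomp_monor, As_qinv_le | apply Hl].
Qed.

Lemma IsSymLeftAdj_As_star X (B : QCatData Q) (phi : dist (star X) B) :
  IsSymLeftAdj (A := As (star X)) phi -> IsSymLeftAdj phi.
Proof.
  unfold IsSymLeftAdj, IsAdj, IsDist. cbn. rewrite !qmeet_id_qinv. exact (fun H => H).
Qed.

End QuantaloidFacts.

Arguments distcomp_le {Q A B C} Psi Phi z x {t} _.
Arguments distcomp_qcomp_le {Q A B C} Psi Phi z x {W f t} _.
Arguments qcomp_distcomp_le {Q A B C} Psi Phi z x {W g t} _.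
Arguments qcomp_distcomp_qcomp_le {Q A B C} Psi Phi z x {V W g f t} _.

Section SymmetricLeftAdjoint.
Variables (Q : InvQuantaloid) (B : QCatData Q) (X : qobj Q) (phi : dist (star X) B).
Hypothesis phi_sym : IsSymLeftAdj phi.

Lemma symladj_dist b a : hm B b a ⊙ phi a tt ≤ phi b tt.
Proof. exact (proj1 (proj1 phi_sym) b a tt). Qed.

Lemma symladj_unit : qid X ≤ distcomp (dop phi) phi tt tt.
Proof. exact (proj1 (proj2 (proj2 phi_sym)) tt tt). Qed.

Lemma symladj_counit b a : phi b tt ⊙ qinv (phi a tt) ≤ hm B b a.
Proof.
  eapply qle_trans; [apply (le_distcomp phi (dop phi) b a tt)|].
  exact (proj2 (proj2 (proj2 phi_sym)) b a).
Qed.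

Lemma le_symladj a (g : qhom Q X (ty B a)) :
  (forall b, g ⊙ qinv (phi b tt) ≤ hm B a b) -> g ≤ phi a tt.
Proof.
  intro Hg. eapply qle_trans; [apply (le_qcomp_idr g symladj_unit)|].
  apply (qcomp_distcomp_le (dop phi) phi tt tt). intro b. rewrite qcomp_assoc.
  eapply qle_trans; [apply qcomp_monor, Hg | apply symladj_dist].
Qed.

End SymmetricLeftAdjoint.

Lemma le_distcomp_dop_symladj (Q : InvQuantaloid) (B : QCatData Q) X Y
    (phi : dist (star X) B) (phi' : dist (star Y) B) (f : qhom Q X Y) :
  IsSymLeftAdj phi -> IsSymLeftAdj phi' ->
  (forall d e, phi' d tt ⊙ f ⊙ qinv (phi e tt) ≤ hm B d e) ->
  f ≤ distcomp (dop phi') phi tt tt.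
Proof.
  intros phi_sym phi'_sym Hf.
  eapply qle_trans; [apply (le_qcomp_idl f (symladj_unit phi'_sym))|].
  apply (distcomp_qcomp_le (dop phi') phi' tt tt). intro d. rewrite <- qcomp_assoc.
  eapply qle_trans; [|apply (le_distcomp (dop phi') phi tt tt d)].
  apply qcomp_monol, (le_symladj phi_sym), Hf.
Qed.

Definition SAl (Q : InvQuantaloid) (A : QCatData Q) : dist A (As A) := fun y x => hm A y x.
Arguments SAl {Q} A.

Definition LA (Q : InvQuantaloid) (A : QCatData Q) X (phi : dist (star X) (As A))
  : dist (star X) A := distcomp (SA A) phi.

Definition LA_radj (Q : InvQuantaloid) (A : QCatData Q) X (phi : dist (star X) (As A))
  : dist A (star X) := distcomp (dop phi) (SAl A).

Section LA.
Variables (Q : InvQuantaloid) (A : QCatData Q).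
Hypothesis HA : IsQCat A.

Let A_trans z y x : hm A z y ⊙ hm A y x ≤ hm A z x := proj1 HA z y x.
Let A_refl x : qid (ty A x) ≤ hm A x x := proj2 HA x.

Lemma le_LA X (phi : dist (star X) (As A)) a : phi a tt ≤ LA phi a tt.
Proof.
  eapply qle_trans; [|apply (le_distcomp (SA A) phi a tt a)].
  apply le_qcomp_idl, A_refl.
Qed.

Lemma qinv_le_LA_radj X (phi : dist (star X) (As A)) a : qinv (phi a tt) ≤ LA_radj phi tt a.
Proof.
  eapply qle_trans; [|apply (le_distcomp (dop phi) (SAl A) tt a a)].
  apply le_qcomp_idr, A_refl.
Qed.

Section SymmetricPresheaf.
Variables (X : qobj Q) (phi : dist (star X) (As A)).
Hypothesis phi_sym : IsSymLeftAdj phi.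

Lemma LA_IsAdj : IsAdj (LA phi) (LA_radj phi).
Proof.
  split; [split | split; [split | split]]; cbn.
  - intros y' y u. apply (qcomp_distcomp_le (SA A) phi y u). intro c.
    rewrite qcomp_assoc. eapply qle_trans; [|apply le_distcomp].
    apply qcomp_monor, A_trans.
  - intros y u u'. destruct u, u'. rewrite qcomp_id_r. apply qle_refl.
  - intros u u' y. destruct u, u'. rewrite qcomp_id_l. apply qle_refl.
  - intros u y y'. apply (distcomp_qcomp_le (dop phi) (SAl A) u y). intro d.
    rewrite <- qcomp_assoc. eapply qle_trans; [|apply le_distcomp].
    apply qcomp_monol, A_trans.
  - intros u u'. destruct u, u'.
    eapply qle_trans; [apply (symladj_unit phi_sym)|].
    apply (distcomp_le (dop phi) phi tt tt). intro a.
    eapply qle_trans; [|apply (le_distcomp (LA_radj phi) (LA phi) tt tt a)].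
    apply qcomp_mono; [apply qinv_le_LA_radj | apply le_LA].
  - intros b a. apply (distcomp_le (LA phi) (LA_radj phi) b a). intros [].
    apply (distcomp_qcomp_le (SA A) phi b tt). intro c.
    apply (qcomp_distcomp_le (dop phi) (SAl A) tt a). intro d.
    rewrite qcomp_assoc, <- (qcomp_assoc (SA A b c)).
    eapply qle_trans; [|apply (A_trans b d a)]. apply qcomp_monor.
    eapply qle_trans; [|apply (A_trans b c d)]. apply qcomp_monol.
    eapply qle_trans; [apply (symladj_counit phi_sym) | apply qmeet_lel].
Qed.

Lemma LA_counit a b : LA phi a tt ⊙ LA_radj phi tt b ≤ hm A a b.
Proof.
  eapply qle_trans; [apply (le_distcomp (LA phi) (LA_radj phi) a b tt)|].
  exact (proj2 (proj2 (proj2 LA_IsAdj)) a b).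
Qed.

Lemma radj_LA : radj (LA phi) = LA_radj phi.
Proof. exact (radj_eq (@star_refl Q X) LA_IsAdj). Qed.

(* Both meetands of [(LA phi)_s(a)] are bounded via the counit of [LA phi], so
   [le_symladj] applies. *)
Lemma dist_s_LA : (dist_s (LA phi) : dist (star X) (As A)) = phi.
Proof.
  apply functional_extensionality_dep; intro a.
  apply functional_extensionality_dep; intros [].
  unfold dist_s. rewrite radj_LA. apply qle_antisym.
  - apply (le_symladj phi_sym). intro b. apply qmeet_glb.
    + eapply qle_trans; [apply qcomp_mono; [apply qmeet_lel | apply qinv_le_LA_radj]|].
      apply LA_counit.
    + apply qinv_ler. rewrite qinv_comp. unfold dop. rewrite qinv_inv.
      eapply qle_trans; [apply qcomp_mono; [apply le_LA | apply qinv_lel, qmeet_ler]|].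
      apply LA_counit.
  - apply qmeet_glb; [apply le_LA | apply qinv_ler, qinv_le_LA_radj].
Qed.

End SymmetricPresheaf.

Lemma LA_dist_s X (psi : dist (star X) A) R :
  IsAdj psi R -> IsSymLeftAdj (dist_s psi : dist (star X) (As A)) ->
  forall a u, LA (dist_s psi : dist (star X) (As A)) a u = psi a u.
Proof.
  intros psi_adj psi_s_sym a [].
  assert (radj_psi : radj psi = R) by exact (radj_eq (@star_refl Q X) psi_adj).
  destruct psi_adj as [[psi_dist _] [_ [_ psi_counit]]].
  apply qle_antisym.
  - apply (distcomp_le (SA A) (dist_s psi : dist (star X) (As A)) a tt). intro b.
    eapply qle_trans; [apply qcomp_monol, qmeet_lel | apply (psi_dist a b tt)].
  - eapply qle_trans; [apply (le_qcomp_idr _ (symladj_unit psi_s_sym))|].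
    apply (qcomp_distcomp_le (dop (dist_s psi : dist (star X) (As A)))
                             (dist_s psi : dist (star X) (As A)) tt tt).
    intro b.
    rewrite qcomp_assoc. eapply qle_trans; [|apply le_distcomp]. apply qcomp_monor.
    eapply qle_trans; [apply qcomp_monol, qinv_lel, qmeet_ler|].
    rewrite radj_psi. eapply qle_trans; [apply (le_distcomp psi R a b tt) | apply psi_counit].
Qed.

Lemma qinv_comp_le_cchom_LA X Y (phi : dist (star X) (As A)) (phi' : dist (star Y) (As A)) a :
  IsSymLeftAdj phi' -> qinv (phi' a tt) ⊙ phi a tt ≤ cchom (LA phi') (LA phi).
Proof.
  intro phi'_sym. unfold cchom. rewrite (radj_LA phi'_sym).
  eapply qle_trans; [|apply (le_distcomp (LA_radj phi') (LA phi) tt tt a)].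
  apply qcomp_mono; [apply qinv_le_LA_radj | apply le_LA].
Qed.

Lemma comp_cchom_LA_qinv_le X Y (phi : dist (star X) (As A)) (phi' : dist (star Y) (As A)) d e :
  IsSymLeftAdj phi -> IsSymLeftAdj phi' ->
  phi' d tt ⊙ cchom (LA phi') (LA phi) ⊙ qinv (phi e tt) ≤ hm A d e.
Proof.
  intros phi_sym phi'_sym. unfold cchom. rewrite (radj_LA phi'_sym).
  apply (qcomp_distcomp_qcomp_le (LA_radj phi') (LA phi) tt tt). intro a.
  rewrite qcomp_assoc, <- (qcomp_assoc (phi' d tt ⊙ _)).
  eapply qle_trans; [|apply (A_trans d a e)]. apply qcomp_mono.
  - eapply qle_trans; [apply qcomp_monor, le_LA | apply (LA_counit phi'_sym)].
  - eapply qle_trans; [apply qcomp_monol, qinv_le_LA_radj | apply (LA_counit phi_sym)].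
Qed.

Lemma cchom_LA X Y (phi : dist (star X) (As A)) (phi' : dist (star Y) (As A)) :
  IsSymLeftAdj phi -> IsSymLeftAdj phi' ->
  qmeet (cchom (LA phi') (LA phi)) (qinv (cchom (LA phi) (LA phi'))) = cchom phi' phi.
Proof.
  intros phi_sym phi'_sym.
  unfold cchom at 3. rewrite (radj_eq (@star_refl Q Y) phi'_sym).
  apply qle_antisym.
  - apply le_distcomp_dop_symladj; [exact phi_sym | exact phi'_sym |]. intros d e.
    apply qmeet_glb.
    + eapply qle_trans; [apply qcomp_monor, qcomp_monol, qmeet_lel|].
      exact (comp_cchom_LA_qinv_le d e phi_sym phi'_sym).
    + apply qinv_ler. rewrite !qinv_comp, qinv_inv, qcomp_assoc.
      eapply qle_trans; [apply qcomp_monor, qcomp_monol, qinv_lel, qmeet_ler|].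
      exact (comp_cchom_LA_qinv_le e d phi'_sym phi_sym).
  - apply qmeet_glb; apply (distcomp_le (dop phi') phi tt tt); intro a.
    + exact (qinv_comp_le_cchom_LA phi a phi'_sym).
    + apply qinv_ler. unfold dop. rewrite qinv_comp, qinv_inv.
      exact (qinv_comp_le_cchom_LA phi' a phi_sym).
Qed.

End LA.

Definition dist_col (Q : InvQuantaloid) (X A : QCatData Q) (Psi : dist X A) (x : ob X)
  : dist (star (ty X x)) A := fun a _ => Psi a x.
Arguments dist_col {Q X A} Psi x.

Definition dist_row (Q : InvQuantaloid) (X A : QCatData Q) (R : dist A X) (x : ob X)
  : dist A (star (ty X x)) := fun _ a => R x a.
Arguments dist_row {Q X A} R x.

Section Columns.
Variables (Q : InvQuantaloid) (X A : QCatData Q) (Psi : dist X A) (R : dist A X).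
Hypotheses (X_refl : forall x, qid (ty X x) ≤ hm X x x) (Psi_adj : IsAdj Psi R).

Lemma IsAdj_col x : IsAdj (dist_col Psi x) (dist_row R x).
Proof.
  destruct Psi_adj as [[Psi_l _] [[_ R_r] [Psi_unit Psi_counit]]].
  split; [split | split; [split | split]]; cbn.
  - intros y' y u. apply Psi_l.
  - intros y u u'. rewrite qcomp_id_r. apply qle_refl.
  - intros u u' y. rewrite qcomp_id_l. apply qle_refl.
  - intros u y y'. apply R_r.
  - intros u u'. eapply qle_trans; [apply (qle_trans (X_refl x) (Psi_unit x x))|].
    apply (distcomp_le R Psi x x). intro a.
    apply (le_distcomp (dist_row R x) (dist_col Psi x) u u' a).
  - intros y' y. apply (distcomp_le (dist_col Psi x) (dist_row R x) y' y). intros u.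
    eapply qle_trans; [apply (le_distcomp Psi R y' y x) | apply Psi_counit].
Qed.

Lemma dist_s_col x :
  (dist_s (dist_col Psi x) : dist (star (ty X x)) (As A)) = dist_col (dist_s Psi) x.
Proof.
  unfold dist_s.
  rewrite (radj_eq (@star_refl Q (ty X x)) (IsAdj_col x)), (radj_eq X_refl Psi_adj).
  reflexivity.
Qed.

(* [Psi_s] is assembled from its columns; the unit of each column gives the unit
   of [Psi_s] at the corresponding object. *)
Lemma IsSymLeftAdj_dist_s :
  (forall x, IsSymLeftAdj (B := As A) (dist_col (dist_s Psi) x)) -> IsSymLeftAdj (dist_s Psi).
Proof.
  intro col_sym.
  assert (qinv_Psi_s_le : forall a x, qinv (dist_s Psi a x) ≤ R x a).
  { intros a x. unfold dist_s. rewrite (radj_eq X_refl Psi_adj). apply qinv_lel, qmeet_ler. }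
  destruct Psi_adj as [[_ Psi_r] [[R_l _] _]].
  assert (Psi_s_dist : IsDist (dist_s Psi)).
  { split.
    - intros y' y x. exact (symladj_dist (col_sym x) y' y).
    - intros y x x'. apply qmeet_glb.
      + eapply qle_trans; [apply qcomp_mono; apply qmeet_lel | apply Psi_r].
      + rewrite (radj_eq X_refl Psi_adj). apply qinv_ler. rewrite qinv_comp.
        eapply qle_trans; [apply qcomp_mono; [apply qinv_lel, qmeet_ler | apply qinv_Psi_s_le]|].
        apply R_l. }
  split; [exact Psi_s_dist | split; [exact (dop_IsDist Psi_s_dist) | split]].
  - intros x' x.
    eapply qle_trans; [apply (le_qcomp_idr _ (symladj_unit (col_sym x)))|].
    apply (qcomp_distcomp_le (dop (dist_col (dist_s Psi) x)) (dist_col (dist_s Psi) x) tt tt).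
    intro a. rewrite qcomp_assoc.
    eapply qle_trans; [|apply (le_distcomp (dop (dist_s Psi)) (dist_s Psi) x' x a)].
    apply qcomp_monor, (proj1 (dop_IsDist Psi_s_dist)).
  - intros y' y. apply (distcomp_le (dist_s Psi) (dop (dist_s Psi)) y' y). intro x.
    exact (symladj_counit (col_sym x) y' y).
Qed.

End Columns.


Theorem proposition3p6 (Q : InvQuantaloid) (A : QCatData Q) (HA : IsQCat A) :
  let L := fun (X : qobj Q) (phi : dist (star X) (As A)) =>
             distcomp (SA A) phi in
  let C1 :=
    (* (1) L_A : (A_s)_sc -> (A_cc)_s is surjective on objects *)
    forall (X : qobj Q) (psi : dist (star X) A), IsLeftAdj psi ->
      exists phi : dist (star X) (As A),
        IsSymLeftAdj phi /\ (forall a u, L X phi a u = psi a u) in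
  let C2 :=
    (* (2) psi_s : *_X -> A_s is a symmetric left adjoint *)
    forall (X : qobj Q) (psi : dist (star X) A), IsLeftAdj psi ->
      IsSymLeftAdj (B := As A) (dist_s psi : dist (star X) (As A)) in
  let C3 :=
    (* (3) Psi_s : X_s -> A_s is a symmetric left adjoint *)
    forall (X : QCatData Q), IsQCat X ->
      forall Psi : dist X A, IsLeftAdj Psi -> IsSymLeftAdj (dist_s Psi) in
  (C1 <-> C2) /\ (C2 <-> C3) /\
  (C1 ->
    (* L_A is well defined on objects *)
    (forall (X : qobj Q) (phi : dist (star X) (As A)),
        IsSymLeftAdj phi -> IsLeftAdj (L X phi)) /\
    (* psi |-> psi_s lands in (A_s)_sc and is a right inverse of L_A *)
    (forall (X : qobj Q) (psi : dist (star X) A), IsLeftAdj psi ->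
        IsSymLeftAdj (B := As A) (dist_s psi : dist (star X) (As A)) /\
        (forall a u, L X (dist_s psi : dist (star X) (As A)) a u = psi a u)) /\
    (* ... and a left inverse of L_A *)
    (forall (X : qobj Q) (phi : dist (star X) (As A)), IsSymLeftAdj phi ->
        forall a u, (dist_s (L X phi) : dist (star X) (As A)) a u = phi a u) /\
    (* L_A preserves homs: (A_cc)_s(L phi', L phi) = (A_s)_sc(phi', phi) *)
    (forall (X Y : qobj Q) (phi : dist (star X) (As A)) (phi' : dist (star Y) (As A)),
        IsSymLeftAdj phi -> IsSymLeftAdj phi' ->
        qmeet (cchom (L Y phi') (L X phi)) (qinv (cchom (L X phi) (L Y phi')))
        = cchom phi' phi)).
Proof.
  intros L C1 C2 C3.
  assert (C2_of_C1 : C1 -> C2).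
  { intros H1 X psi psi_ladj. destruct (H1 X psi psi_ladj) as [phi [phi_sym L_phi]].
    replace psi with (LA phi)
      by (do 2 (apply functional_extensionality_dep; intro); apply L_phi).
    rewrite (dist_s_LA HA phi_sym). exact phi_sym. }
  assert (L_dist_s : C2 -> forall X (psi : dist (star X) A), IsLeftAdj psi ->
                       forall a u, L X (dist_s psi) a u = psi a u).
  { intros H2 X psi [R psi_adj]. exact (LA_dist_s psi_adj (H2 X psi (ex_intro _ R psi_adj))). }
  split; [split | split; [split |]].
  - exact C2_of_C1.
  - intros H2 X psi psi_ladj. exists (dist_s psi). auto.
  - intros H2 Xc [_ Xc_refl] Psi [R Psi_adj].
    apply (IsSymLeftAdj_dist_s Xc_refl Psi_adj). intro x.
    rewrite <- (dist_s_col Xc_refl Psi_adj x). apply H2.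
    exists (dist_row R x). exact (IsAdj_col Xc_refl Psi_adj x).
  - intros H3 X psi psi_ladj.
    exact (IsSymLeftAdj_As_star (H3 (star X) (star_IsQCat X) psi psi_ladj)).
  - intro H1. pose proof (C2_of_C1 H1) as H2. split; [| split; [| split]].
    + intros X phi phi_sym. exists (LA_radj phi). exact (LA_IsAdj HA phi_sym).
    + intros X psi psi_ladj. auto.
    + intros X phi phi_sym a u. exact (f_equal (fun f => f a u) (dist_s_LA HA phi_sym)).
    + intros X Y phi phi' phi_sym phi'_sym. exact (cchom_LA HA phi_sym phi'_sym).
Qed.
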